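(* Let $\Sigma$ be a ranked alphabet, $B$ a strong bimonoid and $\mathcal{A}=(Q,\delta,F)$ a $(\Sigma,B)$-wta. The following are equivalent: (i) $\mathcal{N}(\mathcal{A})$ is finite; (ii) for each final variant $\mathcal{B}$ of $\mathcal{A}$, the Nerode algebra $\mathcal{N}(\mathcal{B})$ is finite and $[\![\mathcal{B}]\!]^{\mathrm{init}}$ is i-recognizable by a final variant of $\mathrm{rel}(\mathcal{N}(\mathcal{A}))$; (iii) each $r\in[\![\mathrm{FV}(\mathcal{A})]\!]^{\mathrm{init}}$ is i-recognizable by some crisp-deterministic $(\Sigma,B)$-wta.
   Context: Ranked alphabet $\Sigma$ ($\Sigma^{(0)}\ne\emptyset$), trees $T_\Sigma$; strong bimonoid $(B,\oplus,\otimes,\mathbb{0},\mathbb{1})$ (commutative monoid $(B,\oplus,\mathbb{0})$, monoid $(B,\otimes,\mathbb{1})$, $\mathbb{0}\ne\mathbb{1}$, $\mathbb{0}$ absorbing, no distributivity). $(\Sigma,B)$-wta $\mathcal{A}=(Q,\delta,F)$: $Q$ finite nonempty, $\delta_k:Q^k\times\Sigma^{(k)}\times Q\to B$, $F:Q\to B$. Vector algebra $\mathrm{V}(\mathcal{A})=(B^Q,\delta_{\mathcal{A}})$, $\delta_{\mathcal{A}}(\sigma)(v_1,\dots,v_k)_q=\bigoplus_{q_1,\dots,q_k}\big(\bigotimes_{i=1}^k(v_i)_{q_i}\big)\otimes\delta_k(q_1\dots q_k,\sigma,q)$; $h_{\mathrm{V}(\mathcal{A})}:T_\Sigma\to B^Q$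 the unique homomorphism; $[\![\mathcal{A}]\!]^{\mathrm{init}}(\xi)=\bigoplus_q h_{\mathrm{V}(\mathcal{A})}(\xi)_q\otimes F_q$. A weighted tree language $r:T_\Sigma\to B$ is i-recognizable by $\mathcal{A}$ if $r=[\![\mathcal{A}]\!]^{\mathrm{init}}$. Crisp-deterministic: for all $k,\sigma\in\Sigma^{(k)},q_1,\dots,q_k$ a unique $q$ with $\delta_k(q_1\dots q_k,\sigma,q)=\mathbb{1}$, all other such values $\mathbb{0}$. A final variant of $\mathcal{A}$ is any wta $(Q,\delta,F')$ with $F':Q\to B$ arbitrary; $\mathrm{FV}(\mathcal{A})$ is the set of final variants, $[\![\mathrm{FV}(\mathcal{A})]\!]^{\mathrm{init}}=\{[\![\mathcal{B}]\!]^{\mathrm{init}}\mid\mathcal{B}\in\mathrm{FV}(\mathcal{A})\}$. Nerode algebra $\mathcal{N}(\mathcal{A})=(Q_{\mathcal{N}},\theta_{\mathcal{N}},F_{\mathcal{N}})$: $(Q_{\mathcal{N}},\theta_{\mathcal{N}})$ the smallest subalgebra of $\mathrm{V}(\mathcal{A})$ (so $Q_{\mathcal{N}}=\mathrm{im}(h_{\mathrm{V}(\mathcal{A})})$), $(F_{\mathcal{N}})_v=\bigoplus_q v_q\otimes F_q$; finite if $Q_{\mathcal{N}}$ is finite. For a finite $(\Sigma,B)$-algebra $(P,\theta,G)$ ($(P,\theta)$ a $\Sigma$-algebra, $G:P\to B$), $\mathrm{rel}(P,\theta,G)$ is the crisp-deterministic wta $(P,\delta',G)$ with $\delta'_k(p_1\dots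 p_k,\sigma,p)=\mathbb{1}$ iff $\theta(\sigma)(p_1,\dots,p_k)=p$, and $\mathbb{0}$ otherwise. *)

From HB Require Import structures.
From mathcomp Require Import all_boot.
From mathcomp Require Import boolp.

Set Implicit Arguments.
Unset Strict Implicit.
Unset Printing Implicit Defensive.

Definition cls (T : Type) : Type := T.
HB.instance Definition _ (T : Type) := gen_eqMixin (cls T).
HB.instance Definition _ (T : Type) := gen_choiceMixin (cls T).

Record ranked_alphabet := RankedAlphabet {
  sym :> finType;
  rk : sym -> nat }.

Definition has_nullary (S : ranked_alphabet) : Prop := exists s : S, rk s = 0.

Inductive tree (S : ranked_alphabet) : Type :=
  Node (s : S) (ts : 'I_(rk s) -> tree S).

Record strong_bimonoid := StrongBimonoid {
  carrier :> Type;
  badd : carrier -> carrier -> carrier;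
  bmul : carrier -> carrier -> carrier;
  bzero : carrier;
  bone : carrier;
  baddA : forall x y z, badd x (badd y z) = badd (badd x y) z;
  baddC : forall x y, badd x y = badd y x;
  badd0 : forall x, badd bzero x = x;
  bmulA : forall x y z, bmul x (bmul y z) = bmul (bmul x y) z;
  bmul1 : forall x, bmul bone x = x;
  bmulr1 : forall x, bmul x bone = x;
  bmul0 : forall x, bmul bzero x = bzero;
  bmulr0 : forall x, bmul x bzero = bzero;
  bzero_neq_one : bzero <> bone }.

(* finite sums (order irrelevant since (B, +, 0) is a commutative monoid) and
   ordered finite products *)
Definition bsum (B : strong_bimonoid) (I : Type) (l : seq I) (f : I -> B) : B :=
  foldr (fun i acc => badd (f i) acc) (bzero B) l.
Definition bprod (B : strong_bimonoid) (l : seq B) : B :=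
  foldr (@bmul B) (bone B) l.

(* delta s qs q  is  delta_k(q_1 ... q_k, s, q)  with k = rk s, qs i = q_(i+1) *)
Record wta (S : ranked_alphabet) (B : strong_bimonoid) := Wta {
  st : finType;
  delta : forall s : S, {ffun 'I_(rk s) -> st} -> st -> B;
  fin : st -> B }.

Section WtaSem.
Variables (S : ranked_alphabet) (B : strong_bimonoid) (A : wta S B).

(* operation of the vector algebra V(A) = (B^Q, delta_A) *)
Definition valg (s : S) (v : 'I_(rk s) -> st A -> B) : st A -> B :=
  fun q => bsum (enum {ffun 'I_(rk s) -> st A})
    (fun qs => bmul (bprod [seq v i (qs i) | i <- enum 'I_(rk s)]) (delta qs q)).

Fixpoint hV (t : tree S) : st A -> B :=
  match t with Node s ts => valg (fun i => hV (ts i)) end.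

Definition init_sem (t : tree S) : B :=
  bsum (enum (st A)) (fun q => bmul (hV t q) (fin q)).

Definition hvec (t : tree S) : {ffun st A -> cls B} := [ffun q => hV t q].

(* N(A) is finite: Q_N = im(h_V(A)) is a finite set *)
Definition nerode_finite : Prop :=
  exists l : seq {ffun st A -> cls B}, forall t, hvec t \in l.

Definition enumerates_nerode (l : seq {ffun st A -> cls B}) : Prop :=
  uniq l /\ forall v, v \in l <-> exists t, v = hvec t.

(* rel(Q_N, theta_N, G) for the Nerode algebra with states enumerated by l
   (theta_N is the restriction of delta_A) and an arbitrary final weight G *)
Definition rel_nerode (l : seq {ffun st A -> cls B}) (G : seq_sub l -> B)
  : wta S B :=
  @Wta S B (seq_sub l)
    (fun s ps p =>
       if ([ffun q => valg (fun i => (val (ps i) : {ffun st A -> cls B})) q]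
              : {ffun st A -> cls B}) == val p
       then bone B else bzero B)
    G.

End WtaSem.

Definition final_variant S B (A : wta S B) (F' : st A -> B) : wta S B :=
  @Wta S B (st A) (@delta S B A) F'.

Definition crisp_deterministic S B (A : wta S B) : Prop :=
  forall (s : S) (qs : {ffun 'I_(rk s) -> st A}),
    exists q, delta qs q = bone B /\ forall q', q' <> q -> delta qs q' = bzero B.

Definition i_recognizes S B (A : wta S B) (r : tree S -> B) : Prop :=
  forall t, r t = init_sem A t.

From HB Require Import structures.
From mathcomp Require Import all_boot boolp.

Set Implicit Arguments.
Unset Strict Implicit.
Unset Printing Implicit Defensive.

(* A crisp-deterministic wta reaches exactly one state on every tree, so its
   semantics only takes the finitely many values of its final weights.
   (i) -> (ii), (iii): if N(A) is finite, rel(N(A)) is crisp-deterministic and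
   on a tree t it reaches precisely the state h_V(A)(t); giving it the final
   weight v |-> (+)_q v_q (x) F'_q recovers the semantics of the final variant
   with final weight F'.
   (iii) -> (i): with the final weight "indicator of q" the semantics of a final
   variant is the q-th coordinate of h_V(A); by (iii) each coordinate takes
   finitely many values, hence so does h_V(A). *)

Section StrongBimonoidSums.
Variable B : strong_bimonoid.

Lemma eq_bsum (I : Type) (l : seq I) (f g : I -> B) :
  f =1 g -> bsum l f = bsum l g.
Proof. by move=> fg; elim: l => //= i l ->; rewrite fg. Qed.

Lemma bsum_eq0 (I : eqType) (l : seq I) (f : I -> B) :
  {in l, forall i, f i = bzero B} -> bsum l f = bzero B.
Proof.
elim: l => //= i l IH f0.
by rewrite f0 ?mem_head // badd0 IH // => j lj; rewrite f0 // inE lj orbT.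
Qed.

Lemma bsum_only (I : eqType) (l : seq I) (f : I -> B) (i : I) :
  uniq l -> i \in l -> {in l, forall j, j != i -> f j = bzero B} ->
  bsum l f = f i.
Proof.
elim: l => //= j l IH /andP[jNl uniq_l] il f0.
have [ji|ji] := eqVneq j i.
  subst j; rewrite bsum_eq0 ?(baddC _ (bzero B)) ?badd0 // => k lk.
  by apply: f0; [rewrite inE lk orbT | apply: contraNneq _ jNl => <-].
rewrite f0 ?mem_head // badd0 IH //; first by move: il; rewrite inE eq_sym (negbTE ji).
by move=> k lk; apply: f0; rewrite inE lk orbT.
Qed.

Lemma bprod_eq1 (I : eqType) (l : seq I) (f : I -> B) :
  {in l, forall i, f i = bone B} -> bprod (map f l) = bone B.
Proof.
elim: l => //= i l IH f1.
by rewrite f1 ?mem_head // bmul1 IH // => j lj; rewrite f1 // inE lj orbT.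
Qed.

Lemma bprod_eq0 (I : eqType) (l : seq I) (f : I -> B) (i : I) :
  i \in l -> f i = bzero B -> bprod (map f l) = bzero B.
Proof.
elim: l => //= j l IH; rewrite inE => /orP[/eqP-> -> | il fi0].
  by rewrite bmul0.
by rewrite IH // bmulr0.
Qed.

Definition indicator (T : eqType) (p q : T) : B :=
  if q == p then bone B else bzero B.

Lemma bsum_indicatorl (T : finType) (p : T) (w : T -> B) :
  bsum (enum T) (fun q => bmul (indicator p q) (w q)) = w p.
Proof.
rewrite (bsum_only (i := p)) ?enum_uniq ?mem_enum /indicator ?eqxx ?bmul1 //.
by move=> q _ /negbTE->; rewrite bmul0.
Qed.

Lemma bsum_indicatorr (T : finType) (p : T) (w : T -> B) :
  bsum (enum T) (fun q => bmul (w q) (indicator p q)) = w p.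
Proof.
rewrite (bsum_only (i := p)) ?enum_uniq ?mem_enum /indicator ?eqxx ?bmulr1 //.
by move=> q _ /negbTE->; rewrite bmulr0.
Qed.

(* The product of indicators is the indicator of the tuple; only 0 and 1 are
   multiplied, so no distributivity is needed. *)
Lemma bprod_indicator (I : finType) (T : eqType) (r : I -> T)
    (qs : {ffun I -> T}) :
  bprod [seq indicator (r i) (qs i) | i <- enum I] = indicator [ffun i => r i] qs.
Proof.
rewrite [RHS]/indicator; have [->|qs_r] := eqVneq qs [ffun i => r i].
  by apply: bprod_eq1 => i _; rewrite ffunE /indicator eqxx.
have [i qsi_ri] : exists i, qs i != r i.
  apply/existsP; apply: contraNT qs_r => /existsPn qs_r.
  by apply/eqP/ffunP => i; rewrite ffunE; apply/eqP/negbNE/qs_r.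
by rewrite (bprod_eq0 (i := i)) ?mem_enum // /indicator (negbTE qsi_ri).
Qed.

End StrongBimonoidSums.

Arguments indicator {B T}.

Lemma ffun_image_finite (I : finType) (T : choiceType) (X : Type)
    (h : X -> {ffun I -> T}) :
  (forall i, exists L : seq T, forall x, h x i \in L) ->
  exists l : seq {ffun I -> T}, forall x, h x \in l.
Proof.
move=> /choice[L hL]; set L' := flatten [seq L i | i <- enum I].
have hL' x i : h x i \in L' by apply/flattenP; exists (L i); rewrite ?map_f ?mem_enum.
pose val_ffun (g : {ffun I -> seq_sub L'}) : {ffun I -> T} := [ffun i => val (g i)].
exists (map val_ffun (enum {ffun I -> seq_sub L'})) => x.
apply/mapP; exists [ffun i => SeqSub (hL' x i)]; first by rewrite mem_enum.
by apply/ffunP => i; rewrite !ffunE.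
Qed.

Section CrispRuns.
Variables (S : ranked_alphabet) (B : strong_bimonoid).

Lemma tree_inhabited : has_nullary S -> inhabited (tree S).
Proof.
by case=> s0 rk_s0; constructor; apply: (@Node S s0) => i; case: i; rewrite rk_s0.
Qed.

Lemma valg_indicator (C : wta S B) (s : S) (v : 'I_(rk s) -> st C -> B)
    (r : 'I_(rk s) -> st C) :
  (forall i, v i =1 indicator (r i)) -> valg v =1 delta [ffun i => r i].
Proof.
move=> vE q; rewrite /valg -(bsum_indicatorl _ (fun qs => delta qs q)).
apply: eq_bsum => qs; rewrite -bprod_indicator; congr (bmul (bprod _) _).
by apply: eq_map => i; rewrite vE.
Qed.

Lemma crisp_hV (C : wta S B) :
  crisp_deterministic C -> forall t, exists p, hV (A := C) t =1 indicator p.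
Proof.
move=> C_crisp; elim=> s ts /choice[r hr].
have [p [delta1 delta0]] := C_crisp s [ffun i => r i].
exists p => q; rewrite /= (valg_indicator hr) /indicator.
by case: eqVneq => [->|/eqP]; [exact: delta1 | exact: delta0].
Qed.

Lemma crisp_init_sem (C : wta S B) :
  crisp_deterministic C -> forall t, exists p, init_sem C t = fin (w := C) p.
Proof.
move=> C_crisp t; have [p hp] := crisp_hV C_crisp t; exists p.
by rewrite -(bsum_indicatorl p (@fin S B C)); apply: eq_bsum => q; rewrite hp.
Qed.

End CrispRuns.

Section NerodeAlgebra.
Variables (S : ranked_alphabet) (B : strong_bimonoid) (A : wta S B).

Lemma init_sem_final_indicator (q : st A) (t : tree S) :
  init_sem (final_variant (A := A) (indicator q)) t = hV (A := A) t q.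
Proof. exact: bsum_indicatorr. Qed.

Lemma crisp_final_variants_nerode_finite :
  (forall F' : st A -> B, exists C : wta S B, crisp_deterministic C /\
     i_recognizes C (init_sem (final_variant (A := A) F'))) ->
  nerode_finite A.
Proof.
move=> crisp_FV; apply: ffun_image_finite => q.
have [C [C_crisp C_rec]] := crisp_FV (indicator q).
exists [seq fin p : cls B | p <- enum (st C)] => t; rewrite ffunE.
have [p ->] : exists p, hV (A := A) t q = fin (w := C) p.
  by rewrite -init_sem_final_indicator C_rec; exact: crisp_init_sem.
by rewrite map_f ?mem_enum.
Qed.

Lemma nerode_finite_enumerates :
  nerode_finite A -> exists l, enumerates_nerode (A := A) l.
Proof.
case=> l0 l0_hvec; exists (undup [seq v <- l0 | `[< exists t, v = hvec A t >]]).
split=> [|v]; first exact: undup_uniq.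
rewrite mem_undup mem_filter; split=> [/andP[/asboolP//]|[t ->]].
by rewrite l0_hvec andbT; apply/asboolP; exists t.
Qed.

Lemma enumerates_nerode_hvec (l : seq {ffun st A -> cls B}) :
  enumerates_nerode (A := A) l -> forall t, hvec A t \in l.
Proof. by case=> _ l_im t; apply/l_im; exists t. Qed.

Lemma valg_hvec (s : S) (ts : 'I_(rk s) -> tree S) (v : 'I_(rk s) -> st A -> B) :
  (forall i, v i =1 hvec A (ts i)) ->
  [ffun q => valg v q] = hvec A (Node ts) :> {ffun _ -> cls B}.
Proof.
move=> vE; apply/ffunP => q; rewrite !ffunE /=; congr valg.
by apply: funext => i; apply: funext => q'; rewrite vE ffunE.
Qed.

Section RelNerode.
Variables (l : seq {ffun st A -> cls B}) (l_hvec : forall t, hvec A t \in l).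

Definition nerode_state (t : tree S) : seq_sub l := SeqSub (l_hvec t).

(* The final weight F_N of the Nerode algebra of the final variant with F'. *)
Definition nerode_fin (F' : st A -> B) (p : seq_sub l) : B :=
  bsum (enum (st A)) (fun q => bmul (val p q) (F' q)).

Lemma rel_nerode_hV (G : seq_sub l -> B) (t : tree S) :
  hV (A := rel_nerode G) t =1 indicator (nerode_state t).
Proof.
elim: t => s ts IH p; rewrite /= (valg_indicator IH) /=.
rewrite (@valg_hvec _ ts) => [|i q]; last by rewrite ffunE.
by rewrite -[hvec A _]/(val (nerode_state (Node ts))) val_eqE eq_sym.
Qed.

Lemma rel_nerode_recognizes (F' : st A -> B) :
  i_recognizes (rel_nerode (nerode_fin F')) (init_sem (final_variant (A := A) F')).
Proof.
move=> t; rewrite [RHS]/init_sem; under eq_bsum => p do rewrite rel_nerode_hV.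
by rewrite bsum_indicatorl; apply: eq_bsum => q; rewrite /= ffunE.
Qed.

Lemma rel_nerode_crisp (G : seq_sub l -> B) :
  (forall v, v \in l -> exists t, v = hvec A t) -> crisp_deterministic (rel_nerode G).
Proof.
move=> l_im s ps; have /choice[ts tsE] i := l_im _ (ssvalP (ps i)).
have ps_ts : [ffun q => valg (fun i => ssval (ps i)) q] = hvec A (Node ts).
  by apply: valg_hvec => i q; rewrite tsE.
exists (nerode_state (Node ts)); rewrite /= ps_ts eqxx; split=> // p pN.
by case: eqP => // E; case: pN; apply: val_inj; exact: esym E.
Qed.

Lemma rel_nerode_nonempty : has_nullary S -> 0 < #|{: seq_sub l}|.
Proof. by case/tree_inhabited=> t; apply/card_gt0P; exists (nerode_state t). Qed.

End RelNerode.
End NerodeAlgebra.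

Theorem theorem6p5 (S : ranked_alphabet) (B : strong_bimonoid) (A : wta S B)
  (HS : has_nullary S) (HQ : 0 < #|st A|) :
  (* (i) <-> (ii) *)
  (nerode_finite A <->
   exists l : seq {ffun st A -> cls B},
     enumerates_nerode (A:=A) l /\
     forall F' : st A -> B,
       nerode_finite (final_variant (A:=A) F') /\
       exists G : seq_sub l -> B,
         i_recognizes (rel_nerode (A:=A) G) (init_sem (final_variant (A:=A) F')))
  /\
  (* (i) <-> (iii) *)
  (nerode_finite A <->
   forall F' : st A -> B,
     exists C : wta S B,
       0 < #|st C| /\ crisp_deterministic C /\
       i_recognizes C (init_sem (final_variant (A:=A) F'))).
Proof.
split; split.
- move=> A_fin; have [l l_enum] := nerode_finite_enumerates A_fin.
  have l_hvec := enumerates_nerode_hvec l_enum.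
  (* a final variant has the same vector algebra, hence the same Nerode algebra *)
  exists l; split=> // F'; split; first exact: A_fin.
  by exists (nerode_fin (l := l) F'); exact: rel_nerode_recognizes.
- by case=> l [l_enum _]; exists l; exact: enumerates_nerode_hvec.
- move=> /nerode_finite_enumerates[l l_enum] F'.
  have l_hvec := enumerates_nerode_hvec l_enum.
  exists (rel_nerode (nerode_fin (l := l) F')); split; first exact: rel_nerode_nonempty.
  split; last exact: rel_nerode_recognizes.
  by apply: (rel_nerode_crisp l_hvec) => v /l_enum.2.
- move=> crisp_FV; apply: crisp_final_variants_nerode_finite => F'.
  by have [C [_ C_rec]] := crisp_FV F'; exists C.
Qed.
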